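(* The persistency of entanglement of the $N$-singlet $|S^{(N)}_N\rangle\in(\mathbb{C}^N)^{\otimes N}$ is $N-1$. Equivalently, whatever the choice of single-qudit von Neumann measurements and whatever their outcomes, $N-1$ measurements on distinct qudits are needed to leave the state completely disentangled (fully product).
   Context: The $N$-singlet is the totally antisymmetric state $|S^{(N)}_N\rangle=\frac{1}{\sqrt{N!}}\sum_{\pi\in S_N}\operatorname{sgn}(\pi)|\alpha_{\pi(1)},\dots,\alpha_{\pi(N)}\rangle$ for an orthonormal basis $\{|\alpha_i\rangle\}$ of $\mathbb{C}^N$. The persistency of entanglement of a multipartite pure state is the minimal number of local (single-subsystem) von Neumann measurements that, for all measurement outcomes, leave the state completely disentangled. *)

From HB Require Import structures.
From mathcomp Require Import all_boot all_order all_fingroup all_algebra.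
Set Implicit Arguments. Unset Strict Implicit. Unset Printing Implicit Defensive.
Import Order.TTheory GRing.Theory Num.Theory.
Local Open Scope ring_scope.

Section Qudits.
Variable C : numClosedFieldType.
Variable N : nat.

(* A pure state of N qudits, each of local dimension N, i.e. a vector of
   (C^N)^{(x) N}: amplitudes indexed by multi-indices x : qudit -> level.
   (Unnormalised vectors are allowed.) *)
Definition state := {ffun {ffun 'I_N -> 'I_N} -> C}.

(* The N-singlet, written in the computational (orthonormal) basis
   |alpha_i> = e_i :
   |S_N^(N)> = 1/sqrt(N!) sum_{pi in S_N} sgn(pi) |alpha_{pi(1)},...,alpha_{pi(N)}>. *)
Definition singlet : state :=
  [ffun x : {ffun 'I_N -> 'I_N} => (sqrtC (N`!)%:R)^-1 *
             \sum_(s : 'S_N) (-1) ^+ odd_perm s * ([ffun i => s i] == x)%:R].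

(* An orthonormal basis of C^N : b j a = a-th coordinate of the j-th vector. *)
Definition orthonormal_basis (b : 'I_N -> 'I_N -> C) : Prop :=
  forall j k : 'I_N, \sum_(a < N) b j a * (b k a)^* = (j == k)%:R.

Definition upd (x : {ffun 'I_N -> 'I_N}) (q a : 'I_N) : {ffun 'I_N -> 'I_N} :=
  [ffun i => if i == q then a else x i].

(* Outcome j of the von Neumann measurement of qudit q in the orthonormal
   basis b: the (unnormalised) post-measurement state
   (|b_j><b_j| acting on qudit q) psi. *)
Definition measure1 (q : 'I_N) (b : 'I_N -> 'I_N -> C) (j : 'I_N)
    (psi : state) : state :=
  [ffun x : {ffun 'I_N -> 'I_N} => b j (x q) * \sum_(a < N) (b j a)^* * psi (upd x q a)].

(* Measuring successively the qudits listed in s, qudit q in basis B q,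
   with outcome o q; the result is the unnormalised post-measurement state
   (it is 0 exactly when this outcome sequence has probability 0). *)
Definition measure_seq (s : seq 'I_N) (B : 'I_N -> 'I_N -> 'I_N -> C)
    (o : 'I_N -> 'I_N) (psi : state) : state :=
  foldr (fun q phi => measure1 q (B q) (o q) phi) psi s.

Definition fully_product (psi : state) : Prop :=
  exists v : 'I_N -> 'I_N -> C, psi = [ffun x : {ffun 'I_N -> 'I_N} => \prod_(q < N) v q (x q)].

Definition disentangled_by (psi : state) (k : nat) : Prop :=
  exists s : seq 'I_N, [/\ uniq s, size s = k &
    exists B : 'I_N -> 'I_N -> 'I_N -> C,
      (forall q, orthonormal_basis (B q)) /\
      forall o : 'I_N -> 'I_N, fully_product (measure_seq s B o psi)].

Definition persistency_is (psi : state) (P : nat) : Prop :=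
  disentangled_by psi P /\ forall k, (k < P)%N -> ~ disentangled_by psi k.

End Qudits.

From HB Require Import structures.
From mathcomp Require Import all_boot all_order all_fingroup all_algebra.
From mathcomp Require Import zify.
Set Implicit Arguments. Unset Strict Implicit. Unset Printing Implicit Defensive.
Import Order.TTheory GRing.Theory Num.Theory.
Local Open Scope ring_scope.

(* The singlet changes sign when two qudits p, r are swapped, and a local
   measurement of a third qudit commutes with that swap; so as long as two
   qudits stay unmeasured, every post-measurement state is antisymmetric in
   them, and a nonzero state antisymmetric in two qudits is never a product.
   Since a complete measurement always has an outcome of nonzero
   probability, fewer than N-1 measurements never suffice.  Conversely, measuring N-1
   qudits in the computational basis fixes N-1 values of a permutation, hence
   the permutation itself, and leaves a single basis vector. *)

Lemma perm_eq_off1 (T : finType) (h : T) (s1 s2 : {perm T}) :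
  {in predC1 h, s1 =1 s2} -> s1 = s2.
Proof.
move=> eq_s; apply/permP => q; have [->|qh] := eqVneq q h; last exact: eq_s.
set i := (s1^-1)%g (s2 h); have s1i : s1 i = s2 h by rewrite permKV.
have [ih|ih] := eqVneq i h; first by rewrite -s1i ih.
by move: (eq_s i ih); rewrite s1i => /perm_inj hi; rewrite hi eqxx in ih.
Qed.

Section Singlet.
Variable C : numClosedFieldType.
Variable N : nat.
Local Notation state := (state C N).
Local Notation idx := {ffun 'I_N -> 'I_N}.

Definition swap_idx (p r : 'I_N) (x : idx) : idx := [ffun i => x (tperm p r i)].

Definition antisym_swap (p r : 'I_N) (phi : state) : Prop :=
  forall x, phi (swap_idx p r x) = - phi x.

Lemma measure1_antisym_swap p r q b j phi : q != p -> q != r ->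
  antisym_swap p r phi -> antisym_swap p r (measure1 q b j phi).
Proof.
move=> qp qr phi_anti x; rewrite !ffunE tpermD 1?eq_sym // -mulrN -sumrN.
congr (_ * _); apply: eq_bigr => a _; rewrite -mulrN -phi_anti.
congr (_ * phi _); apply/ffunP => i; rewrite !ffunE.
have tperm_q : tperm p r q = q by rewrite tpermD 1?eq_sym.
by rewrite -[in RHS]tperm_q (inj_eq perm_inj).
Qed.

Lemma measure_seq_antisym_swap p r s B o phi : p \notin s -> r \notin s ->
  antisym_swap p r phi -> antisym_swap p r (measure_seq s B o phi).
Proof.
elim: s => [|q s IHs] //=; rewrite !inE !negb_or => /andP[pq ps] /andP[rq rs].
by move=> phi_anti; apply: measure1_antisym_swap; rewrite 1?eq_sym //; apply: IHs.
Qed.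

Lemma singlet_antisym_swap p r : p != r -> antisym_swap p r (singlet C N).
Proof.
move=> pr x; rewrite !ffunE -mulrN -sumrN; congr (_ * _).
rewrite (reindex_inj (mulgI (tperm p r))); apply: eq_bigr => s _.
rewrite odd_mul_tperm pr signr_addb mulN1r -mulNr; congr (- _ * (nat_of_bool _)%:R).
apply/eqP/eqP => [/ffunP sx|<-]; apply/ffunP => i; last by rewrite !ffunE permM.
by move: (sx (tperm p r i)); rewrite !ffunE permM tpermK.
Qed.

Lemma antisym_swap_eq0 p r (phi : state) (x : idx) :
  antisym_swap p r phi -> x p = x r -> phi x = 0.
Proof.
move=> phi_anti xpr; have swap_x : swap_idx p r x = x.
  by apply/ffunP => i; rewrite ffunE; case: tpermP => [->|->|].
move: (phi_anti x); rewrite swap_x => /eqP.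
by rewrite -subr_eq0 opprK -mulr2n mulrn_eq0 => /eqP.
Qed.

Lemma state_neq0P (phi : state) : reflect (exists x, phi x != 0) (phi != 0).
Proof.
apply: (iffP idP) => [phi_neq0|[x]]; last by apply: contraNneq => ->; rewrite ffunE.
apply/existsP; apply: contraNT phi_neq0 => /existsPn phi0.
by apply/eqP/ffunP => x; rewrite ffunE; apply/eqP/negPn/phi0.
Qed.

(* Take phi x != 0.  Moving qudit p to level x r makes levels of p and r
   coincide, so that amplitude vanishes and forces the factor v p (x r) to be
   0; but that factor also occurs in phi (swap_idx p r x) = - phi x != 0. *)
Lemma antisym_swap_not_fully_product p r (phi : state) :
  p != r -> antisym_swap p r phi -> phi != 0 -> ~ fully_product phi.
Proof.
move=> pr phi_anti /state_neq0P[x phix] [v phiE].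
have phi_split y : phi y = v p (y p) * \prod_(q | q != p) v q (y q).
  by rewrite phiE ffunE (bigD1 p).
have rest_neq0 : \prod_(q | q != p) v q (x q) != 0.
  by apply: contra phix; rewrite phi_split => /eqP ->; rewrite mulr0.
have vp_xr : v p (x r) = 0.
  pose y := upd x p (x r).
  have : phi y = 0.
    by apply: (antisym_swap_eq0 phi_anti); rewrite !ffunE eqxx eq_sym (negbTE pr).
  rewrite phi_split ffunE eqxx (eq_bigr (fun q => v q (x q))) => [|q /negbTE qp].
    by move/eqP; rewrite mulf_eq0 (negbTE rest_neq0) orbF => /eqP.
  by rewrite ffunE qp.
have : phi (swap_idx p r x) = 0 by rewrite phi_split ffunE tpermL vp_xr mul0r.
by rewrite phi_anti => /eqP; rewrite oppr_eq0 (negbTE phix).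
Qed.

Lemma orthonormal_basis_complete (b : 'I_N -> 'I_N -> C) : orthonormal_basis b ->
  forall a c : 'I_N, \sum_j b j c * (b j a)^* = (a == c)%:R.
Proof.
move=> b_on a c.
pose M := \matrix_(j, k) b j k; pose M' := \matrix_(k, j) (b j k)^*.
have MM' : M *m M' = 1%:M.
  by apply/matrixP => j k; rewrite !mxE -b_on; apply: eq_bigr => i _; rewrite !mxE.
move/matrixP/(_ a c): (mulmx1C MM'); rewrite !mxE => <-.
by apply: eq_bigr => j _; rewrite !mxE mulrC.
Qed.

Lemma sum_measure1 q b (phi : state) : orthonormal_basis b ->
  \sum_j measure1 q b j phi = phi.
Proof.
move=> b_on; apply/ffunP => x; rewrite sum_ffunE.
under eq_bigr do rewrite ffunE big_distrr /=.
rewrite exchange_big (eq_bigr (fun a => (a == x q)%:R * phi (upd x q a))) => [|a _].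
  rewrite (bigD1 (x q)) //= eqxx mul1r big1 ?addr0 => [|a /negbTE ->]; last first.
    by rewrite mul0r.
  by congr (phi _); apply/ffunP => i; rewrite ffunE; case: eqP => // ->.
by under eq_bigr do rewrite mulrA; rewrite -big_distrl (orthonormal_basis_complete b_on).
Qed.

Lemma measure1_neq0 q b (phi : state) : orthonormal_basis b -> phi != 0 ->
  exists j, measure1 q b j phi != 0.
Proof.
move=> b_on phi_neq0; apply/existsP; apply: contraNT phi_neq0 => /existsPn meas0.
by rewrite -(sum_measure1 q phi b_on) big1 // => j _; apply/eqP/negPn/meas0.
Qed.

Lemma eq_in_measure_seq s B o o' (phi : state) : {in s, o =1 o'} ->
  measure_seq s B o phi = measure_seq s B o' phi.
Proof.
elim: s => [|q s IHs] //= eq_o; rewrite eq_o ?mem_head // IHs // => i si.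
by rewrite eq_o // inE si orbT.
Qed.

Lemma exists_measure_seq_neq0 s B (phi : state) : uniq s ->
  (forall q, orthonormal_basis (B q)) -> phi != 0 ->
  exists o, measure_seq s B o phi != 0.
Proof.
move=> + B_on phi_neq0; elim: s => [|q s IHs] /=; first by exists id.
case/andP=> qs /IHs[o meas_neq0].
have [j meas1_neq0] := measure1_neq0 q (B_on q) meas_neq0.
exists (fun i => if i == q then j else o i); rewrite eqxx.
rewrite (@eq_in_measure_seq s B _ o) // => i si.
by case: eqP si => // ->; rewrite (negbTE qs).
Qed.

Lemma singlet_neq0 : singlet C N != 0.
Proof.
apply/state_neq0P; exists [ffun i => i]; rewrite ffunE mulf_eq0 negb_or.
rewrite invr_eq0 sqrtC_eq0 pnatr_eq0 -lt0n fact_gt0 /=.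
rewrite (bigD1 1%g) //= big1 => [|s s1]; last first.
  case: eqP; rewrite ?mulr0 // => /ffunP sE; case/eqP: s1.
  by apply/permP => i; move: (sE i); rewrite !ffunE perm1.
suff -> : [ffun i => (1%g : 'S_N) i] == [ffun i => i].
  by rewrite odd_perm1 mulr1 addr0 oner_eq0.
by apply/eqP/ffunP => i; rewrite !ffunE perm1.
Qed.

Lemma singlet_support x : singlet C N x != 0 -> exists s : 'S_N, x = [ffun i => s i].
Proof.
rewrite ffunE => amp_neq0.
case: (pickP (fun s : 'S_N => [ffun i => s i] == x)) => [s /eqP <-|no_perm].
  by exists s.
by rewrite big1 ?mulr0 ?eqxx // in amp_neq0 => s _; rewrite no_perm mulr0.
Qed.

Lemma measure_seq_singlet_not_fully_product s B o : uniq s -> (size s < N.-1)%N ->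
  measure_seq s B o (singlet C N) != 0 ->
  ~ fully_product (measure_seq s B o (singlet C N)).
Proof.
move=> s_uniq s_small meas_neq0.
have : (1 < #|~: [set q in s]|)%N.
  move: (cardsC [set q in s]) s_small; rewrite cardsE (card_uniqP s_uniq) card_ord.
  set c := #|_|; set m := size s; lia.
case/card_gt1P=> p [r []]; rewrite !in_setC !inE => ps rs pr.
apply: (antisym_swap_not_fully_product pr) => //.
exact/measure_seq_antisym_swap/singlet_antisym_swap.
Qed.

Definition std_basis : 'I_N -> 'I_N -> 'I_N -> C := fun _ j a => (j == a)%:R.

Lemma std_basis_orthonormal q : orthonormal_basis (std_basis q).
Proof.
move=> j k; rewrite /std_basis (bigD1 j) //= big1 => [|a]; last first.
  by rewrite eq_sym => /negbTE ->; rewrite mul0r.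
by rewrite eqxx mul1r addr0 eq_sym rmorph_nat.
Qed.

Lemma measure_seq_std_basis s o (phi : state) :
  measure_seq s std_basis o phi =
  [ffun x : idx => (all (fun q => x q == o q) s)%:R * phi x].
Proof.
elim: s => [|q s IHs] /=; apply/ffunP => x; rewrite !ffunE ?mul1r //.
rewrite /std_basis (bigD1 (o q)) //= big1 => [|a /negbTE]; last first.
  by rewrite eq_sym => ->; rewrite conjC0 mul0r.
rewrite eqxx conjC1 mul1r addr0 IHs ffunE eq_sym.
have [<-|] := eqVneq (x q) (o q); last by rewrite /= !mul0r.
suff -> : upd x q (x q) = x by rewrite mul1r.
by apply/ffunP => i; rewrite ffunE; case: eqP => // ->.
Qed.

Lemma fully_product_of_single_support (phi : state) : (0 < N)%N ->
  (forall x y, phi x != 0 -> phi y != 0 -> x = y) -> fully_product phi.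
Proof.
move=> N_gt0 supp1; pose q0 : 'I_N := Ordinal N_gt0.
pose x0 : idx := odflt [ffun i => i] [pick x | phi x != 0].
exists (fun q a => (if q == q0 then phi x0 else 1) * (a == x0 q)%:R).
apply/ffunP => x; rewrite ffunE; have [->|xx0] := eqVneq x x0.
  rewrite (bigD1 q0) //= eqxx mulr1 big1 ?mulr1 // => q /negbTE ->.
  by rewrite eqxx mulr1.
have -> : phi x = 0.
  apply/eqP; apply: contraNT xx0 => phix; rewrite /x0.
  by case: pickP => [y /(supp1 x y phix) ->|/(_ x)] //=; rewrite phix.
have [q xq] : exists q, x q != x0 q.
  apply/existsP; apply: contraNT xx0 => /existsPn x_eq.
  by apply/eqP/ffunP => q; apply/eqP/negPn/x_eq.
by rewrite (bigD1 q) //= (negbTE xq) !mulr0 mul0r.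
Qed.

Lemma singlet_disentangled_by (h : 'I_N) : disentangled_by (singlet C N) N.-1.
Proof.
have N_gt0 : (0 < N)%N by case: (N) h => [[]|].
exists (enum (predC1 h)); split; rewrite ?enum_uniq // -?cardE ?cardC1 ?card_ord //.
exists std_basis; split=> [|o]; first exact: std_basis_orthonormal.
rewrite measure_seq_std_basis; apply: fully_product_of_single_support => // x y.
rewrite [_ x]ffunE [_ y]ffunE; case: allP => [xo|_]; rewrite ?mul0r ?eqxx // mul1r.
case: allP => [yo|_]; rewrite ?mul0r ?eqxx // mul1r.
move=> /singlet_support[s1 xE] /singlet_support[s2 yE]; subst x y.
suff -> : s1 = s2 by [].
apply: (perm_eq_off1 (h := h)) => q; rewrite -mem_enum => qh.
by move: (xo q qh) (yo q qh); rewrite !ffunE => /eqP -> /eqP ->.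
Qed.

End Singlet.

Theorem mainTheorem7 (C : numClosedFieldType) (N : nat) (hN : (0 < N)%N) :
  persistency_is (singlet C N) N.-1 /\
  (forall (s : seq 'I_N) (B : 'I_N -> 'I_N -> 'I_N -> C) (o : 'I_N -> 'I_N),
     uniq s -> (size s < N.-1)%N -> (forall q, orthonormal_basis (B q)) ->
     measure_seq s B o (singlet C N) != 0 ->
     ~ fully_product (measure_seq s B o (singlet C N))).
Proof.
split; last first.
  by move=> s B o s_uniq s_small _; apply: measure_seq_singlet_not_fully_product.
split; first exact: (singlet_disentangled_by C (Ordinal hN)).
move=> k k_small [s [s_uniq s_size [B [B_on all_product]]]].
have [o meas_neq0] := exists_measure_seq_neq0 s_uniq B_on (singlet_neq0 C N).
apply: (measure_seq_singlet_not_fully_product s_uniq _ meas_neq0 (all_product o)).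
by rewrite s_size.
Qed.
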